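(* Consider the twisted associative algebra generated by an element $\Delta$ of arity $0$ and homological degree $1$, an element $\mathsf m$ of arity $1$ and homological degree $0$, and an element $\mathsf l$ of arity $1$ and homological degree $1$, subject to the relations \[ \Delta^2=0,\quad [\mathsf m_{\{1\}},\mathsf m_{\{2\}}]=0,\quad [\Delta,\mathsf m_{\{1\}}]=\mathsf l_{\{1\}},\quad [\Delta,\mathsf l_{\{1\}}]=0,\quad [\mathsf l_{\{1\}},\mathsf m_{\{2\}}]=0,\quad [\mathsf l_{\{1\}},\mathsf l_{\{2\}}]=0. \] This twisted associative algebra is isomorphic to $\mathrm{tBV}$, the twisted associative algebra generated by $\Delta$ (arity $0$, degree $1$) and $\mathsf m$ (arity $1$, degree $0$) subject to $\Delta^2=0$, $[\mathsf m_{\{1\}},\mathsf m_{\{2\}}]=0$ and $[[\Delta,\mathsf m_{\{1\}}],\mathsf m_{\{2\}}]=0$.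
   Context: Work over a field $\Bbbk$ of characteristic zero, homologically graded vector spaces with the Koszul sign rule. A twisted associative algebra is a species $\mathcal A$ (functor from finite sets with bijections to graded vector spaces) with natural, associative, unital products $\mathcal A(J)\otimes\mathcal A(K)\to\mathcal A(J\sqcup K)$ for disjoint $J,K$; elements of $\mathcal A(I)$ have arity $|I|$. $[\mathsf x,\mathsf y]=\mathsf x\mathsf y-(-1)^{|\mathsf x||\mathsf y|}\mathsf y\mathsf x$. For an arity-one element $\mathsf x$, $\mathsf x_{\{i\}}$ is its relabeling to $\{i\}$. Relations are imposed together with all relabelings. *)

From HB Require Import structures.
From mathcomp Require Import all_boot all_order all_algebra.
Set Implicit Arguments. Unset Strict Implicit. Unset Printing Implicit Defensive.
Import Order.TTheory GRing.Theory Num.Theory.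
Local Open Scope ring_scope.

Definition sumf (I I' J J' : Type) (f : I -> I') (g : J -> J') (s : I + J) : I' + J' :=
  match s with inl x => inl (f x) | inr y => inr (g y) end.
Definition sum_assoc (I J L : Type) (s : (I + J) + L) : I + (J + L) :=
  match s with
  | inl (inl x) => inl x | inl (inr y) => inr (inl y) | inr z => inr (inr z) end.
Definition sum_swap (I J : Type) (s : I + J) : J + I :=
  match s with inl x => inr x | inr y => inl y end.
Definition void_l (I : Type) (s : void + I) : I :=
  match s with inl v => match v with end | inr x => x end.
Definition void_r (I : Type) (s : I + void) : I :=
  match s with inl x => x | inr v => match v with end end.

(* A twisted associative algebra over K, in (Z-)graded vector spaces.
   taa_sp I d is the homogeneous component of homological degree d of A(I),
   for a finite set I (a finType); taa_rel f is the action of a bijection f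
   (the species functoriality); taa_mul is the product
   A(J) (x) A(K) -> A(J |_| K), J |_| K modelled as the sum type J + K. *)
Record TAA (K : fieldType) := {
  taa_sp : finType -> int -> lmodType K;
  taa_rel : forall (I J : finType) (d : int), (I -> J) -> taa_sp I d -> taa_sp J d;
  taa_mul : forall (I J : finType) (d e : int),
      taa_sp I d -> taa_sp J e -> taa_sp (I + J)%type (d + e);
  taa_one : taa_sp void 0
}.

Arguments taa_rel {K} _ {I J d} _ _.
Arguments taa_mul {K} _ {I J d e} _ _.
Arguments taa_one {K} _.

Definition dcast (K : fieldType) (A : TAA K) (I : finType) (d d' : int)
  (H : d = d') (x : taa_sp A I d) : taa_sp A I d' :=
  eq_rect d (taa_sp A I) x d' H.

Definition is_TAA (K : fieldType) (A : TAA K) : Prop :=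
  (forall (I J : finType) d (f : I -> J), bijective f ->
     forall (a : K) (x y : taa_sp A I d),
       taa_rel A f (a *: x + y) = a *: taa_rel A f x + taa_rel A f y) /\
  (forall (I : finType) d (x : taa_sp A I d), taa_rel A id x = x) /\
  (forall (I J L : finType) d (f : I -> J) (g : J -> L), bijective f -> bijective g ->
     forall x : taa_sp A I d, taa_rel A (g \o f) x = taa_rel A g (taa_rel A f x)) /\
  (forall (I J : finType) d e (a : K) (x x' : taa_sp A I d) (y : taa_sp A J e),
     taa_mul A (a *: x + x') y = a *: taa_mul A x y + taa_mul A x' y) /\
  (forall (I J : finType) d e (a : K) (x : taa_sp A I d) (y y' : taa_sp A J e),
     taa_mul A x (a *: y + y') = a *: taa_mul A x y + taa_mul A x y') /\
  (forall (I I' J J' : finType) d e (f : I -> I') (g : J -> J'),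
     bijective f -> bijective g ->
     forall (x : taa_sp A I d) (y : taa_sp A J e),
       taa_mul A (taa_rel A f x) (taa_rel A g y) = taa_rel A (sumf f g) (taa_mul A x y)) /\
  (forall (I J L : finType) d e g (x : taa_sp A I d) (y : taa_sp A J e) (z : taa_sp A L g),
     taa_rel A (@sum_assoc I J L) (taa_mul A (taa_mul A x y) z)
     = dcast (addrA d e g) (taa_mul A x (taa_mul A y z))) /\
  (forall (I : finType) d (x : taa_sp A I d),
     dcast (add0r d) (taa_rel A (@void_l I) (taa_mul A (taa_one A) x)) = x) /\
  (forall (I : finType) d (x : taa_sp A I d),
     dcast (addr0 d) (taa_rel A (@void_r I) (taa_mul A x (taa_one A))) = x).

(* graded commutator [x,y] = x y - (-1)^{|x||y|} y x, where y x in A(K |_| J)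
   is relabelled to A(J |_| K) *)
Definition tcomm (K : fieldType) (A : TAA K) (I J : finType) (d e : int)
  (x : taa_sp A I d) (y : taa_sp A J e) : taa_sp A (I + J)%type (d + e) :=
  taa_mul A x y
  - (-1) ^+ absz (d * e) *: taa_rel A (@sum_swap J I) (dcast (addrC e d) (taa_mul A y x)).

Definition is_TAA_morphism (K : fieldType) (A B : TAA K)
  (phi : forall (I : finType) (d : int), taa_sp A I d -> taa_sp B I d) : Prop :=
  (forall (I : finType) d (a : K) (x y : taa_sp A I d),
     phi I d (a *: x + y) = a *: phi I d x + phi I d y) /\
  (forall (I J : finType) d (f : I -> J), bijective f ->
     forall x : taa_sp A I d, phi J d (taa_rel A f x) = taa_rel B f (phi I d x)) /\
  (forall (I J : finType) d e (x : taa_sp A I d) (y : taa_sp A J e),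
     phi _ _ (taa_mul A x y) = taa_mul B (phi I d x) (phi J e y)) /\
  phi void 0 (taa_one A) = taa_one B.

Definition TAA_isomorphic (K : fieldType) (A B : TAA K) : Prop :=
  exists (phi : forall I d, taa_sp A I d -> taa_sp B I d)
         (psi : forall I d, taa_sp B I d -> taa_sp A I d),
    is_TAA_morphism phi /\ is_TAA_morphism psi /\
    (forall I d (x : taa_sp A I d), psi I d (phi I d x) = x) /\
    (forall I d (y : taa_sp B I d), phi I d (psi I d y) = y).

(* Arity-zero generators live in A(void) (the empty set), arity-one
   generators in A(unit) (a one-element set).  A relation between relabelled
   copies x_{1}, y_{2} is imposed in A(unit + unit) (= A({1} |_| {2}) up to
   relabelling; by naturality all relabellings are then imposed). *)

Definition rels1 (K : fieldType) (A : TAA K)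
  (D : taa_sp A void 1) (m : taa_sp A unit 0) (l : taa_sp A unit 1) : Prop :=
  taa_mul A D D = 0 /\
  tcomm m m = 0 /\
  tcomm D m = taa_rel A (@inr void unit) l /\
  tcomm D l = 0 /\
  tcomm l m = 0 /\
  tcomm l l = 0.

Definition relsBV (K : fieldType) (A : TAA K)
  (D : taa_sp A void 1) (m : taa_sp A unit 0) : Prop :=
  [/\ taa_mul A D D = 0,
      tcomm m m = 0
    & tcomm (tcomm D m) m = 0].

Definition presented1 (K : fieldType) (A : TAA K)
  (D : taa_sp A void 1) (m : taa_sp A unit 0) (l : taa_sp A unit 1) : Prop :=
  is_TAA A /\ rels1 D m l /\
  forall (B : TAA K) (D' : taa_sp B void 1) (m' : taa_sp B unit 0) (l' : taa_sp B unit 1),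
    is_TAA B -> rels1 D' m' l' ->
    exists phi : forall I d, taa_sp A I d -> taa_sp B I d,
      [/\ is_TAA_morphism phi, phi _ _ D = D', phi _ _ m = m', phi _ _ l = l' &
        forall psi : forall I d, taa_sp A I d -> taa_sp B I d,
          is_TAA_morphism psi -> psi _ _ D = D' -> psi _ _ m = m' -> psi _ _ l = l' ->
          forall I d (x : taa_sp A I d), psi I d x = phi I d x].

Definition presentedBV (K : fieldType) (A : TAA K)
  (D : taa_sp A void 1) (m : taa_sp A unit 0) : Prop :=
  is_TAA A /\ relsBV D m /\
  forall (B : TAA K) (D' : taa_sp B void 1) (m' : taa_sp B unit 0),
    is_TAA B -> relsBV D' m' ->
    exists phi : forall I d, taa_sp A I d -> taa_sp B I d,
      [/\ is_TAA_morphism phi, phi _ _ D = D', phi _ _ m = m' &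
        forall psi : forall I d, taa_sp A I d -> taa_sp B I d,
          is_TAA_morphism psi -> psi _ _ D = D' -> psi _ _ m = m' ->
          forall I d (x : taa_sp A I d), psi I d x = phi I d x].

From HB Require Import structures.
From mathcomp Require Import all_boot all_order all_algebra.
From Stdlib Require Import FunctionalExtensionality.
Set Implicit Arguments. Unset Strict Implicit. Unset Printing Implicit Defensive.
Import GRing.Theory.
Local Open Scope ring_scope.

(** In a twisted associative algebra, bracketing with an arity-zero element
   [a], [ad a = [a, -]], is a graded derivation of the product and hence of the
   graded commutator.  Writing it as left minus signed right multiplication by
   [a], associativity shows that it squares to zero when [a] has odd degree and
   [a a = 0].  In tBV put [l := [Δ, m]].  Then [[Δ, l] = 0],
   [[l, m] = [[Δ, m], m] = 0], and applying [ad Δ] to [[l, m] = 0] gives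
   [[l, l] = 0].  Conversely, in the first algebra [[[Δ, m], m] = [l, m] = 0].
   So the generators of each algebra satisfy the relations of the other, and
   the two universal properties give mutually inverse morphisms. *)

Lemma signr_exprz (R : unitRingType) (z : int) : (-1 : R) ^+ absz z = (-1) ^ z.
Proof. by case: z => n //=; rewrite NegzE -exprnN invr_sign. Qed.

Lemma signr_abszD (R : unitRingType) (d e : int) :
  (-1 : R) ^+ absz (d + e) = (-1) ^+ absz d * (-1) ^+ absz e.
Proof. by rewrite !signr_exprz exprzDr // unitrN1. Qed.

Section LinearFunctions.
Variables (R : pzRingType) (U V : lmodType R) (f : U -> V).
Hypothesis f_lin : linear f.
Let fL : {linear U -> V} := HB.pack f (GRing.isLinear.Build _ _ _ _ f f_lin).

Lemma linear_fun0 : f 0 = 0. Proof. exact: (linear0 fL). Qed.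
Lemma linear_funD x y : f (x + y) = f x + f y. Proof. exact: (linearD fL). Qed.
Lemma linear_funB x y : f (x - y) = f x - f y. Proof. exact: (linearB fL). Qed.
Lemma linear_funZ c x : f (c *: x) = c *: f x. Proof. exact: (linearZZ fL). Qed.
End LinearFunctions.

Lemma bij_id (T : Type) : bijective (@id T).
Proof. by exists id. Qed.

Lemma bij_sumf (I I' J J' : Type) (f : I -> I') (g : J -> J') :
  bijective f -> bijective g -> bijective (sumf f g).
Proof.
case=> f' ff' f'f [g' gg' g'g]; exists (sumf f' g').
- by case=> x /=; rewrite ?ff' ?gg'.
- by case=> x /=; rewrite ?f'f ?g'g.
Qed.

Lemma bij_sum_assoc (I J L : Type) : bijective (@sum_assoc I J L).
Proof.
exists (fun s => match s with
  | inl x => inl (inl x) | inr (inl y) => inl (inr y) | inr (inr z) => inr z end).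
- by case=> [[]|].
- by case=> [|[]].
Qed.

Lemma bij_sum_swap (I J : Type) : bijective (@sum_swap I J).
Proof. by exists (@sum_swap J I); case. Qed.

Lemma bij_void_l (I : Type) : bijective (@void_l I).
Proof. by exists inr => [[[]|]|]. Qed.

Lemma bij_void_r (I : Type) : bijective (@void_r I).
Proof. by exists inl => [[|[]]|]. Qed.

Lemma bij_inr (I : Type) : bijective (@inr void I).
Proof. by exists (@void_l I) => [|[[]|]]. Qed.

Ltac solve_bijective := repeat match goal with
  | |- bijective (_ \o _) => apply: bij_comp
  | |- bijective (sumf _ _) => apply: bij_sumf
  | |- bijective _ => first [ assumption | apply: bij_id | apply: bij_sum_assoc
      | apply: bij_sum_swap | apply: bij_void_l | apply: bij_void_r | apply: bij_inr ]
  end.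
#[local] Hint Extern 0 (bijective _) => solve [solve_bijective] : core.

Section DegreeCast.
Variables (K : fieldType) (A : TAA K).

Lemma dcast_irr (I : finType) d d' (H H' : d = d') (x : taa_sp A I d) :
  dcast H x = dcast H' x.
Proof. by rewrite (eq_irrelevance H H'). Qed.

Lemma dcast_id (I : finType) d (H : d = d) (x : taa_sp A I d) : dcast H x = x.
Proof. exact: (dcast_irr H erefl). Qed.

Lemma dcast_comp (I : finType) d d' d'' (H : d = d') (H' : d' = d'')
  (x : taa_sp A I d) : dcast H' (dcast H x) = dcast (etrans H H') x.
Proof. by case: d'' / H'; case: d' / H. Qed.

Lemma dcast_linear (I : finType) d d' (H : d = d') : linear (@dcast K A I d d' H).
Proof. by case: d' / H. Qed.

Lemma dcastB (I : finType) d d' (H : d = d') (x y : taa_sp A I d) :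
  dcast H (x - y) = dcast H x - dcast H y.
Proof. exact: (linear_funB (dcast_linear H)). Qed.

Lemma dcastZ (I : finType) d d' (H : d = d') c (x : taa_sp A I d) :
  dcast H (c *: x) = c *: dcast H x.
Proof. exact: (linear_funZ (dcast_linear H)). Qed.

Lemma dcast0 (I : finType) d d' (H : d = d') : dcast H (0 : taa_sp A I d) = 0.
Proof. exact: (linear_fun0 (dcast_linear H)). Qed.

Lemma dcastD (I : finType) d d' (H : d = d') (x y : taa_sp A I d) :
  dcast H (x + y) = dcast H x + dcast H y.
Proof. exact: (linear_funD (dcast_linear H)). Qed.

Lemma rel_dcast (I J : finType) d d' (H : d = d') (f : I -> J) (x : taa_sp A I d) :
  taa_rel A f (dcast H x) = dcast H (taa_rel A f x).
Proof. by case: d' / H. Qed.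

Lemma tmul_dcastl (I J : finType) d d' e (H : d = d')
    (x : taa_sp A I d) (y : taa_sp A J e) :
  taa_mul A (dcast H x) y = dcast (congr1 (+%R^~ e) H) (taa_mul A x y).
Proof. by case: d' / H; rewrite !dcast_id. Qed.

Lemma tmul_dcastr (I J : finType) d e e' (H : e = e')
    (x : taa_sp A I d) (y : taa_sp A J e) :
  taa_mul A x (dcast H y) = dcast (congr1 (+%R d) H) (taa_mul A x y).
Proof. by case: e' / H; rewrite !dcast_id. Qed.

End DegreeCast.

Section TwistedAlgebra.
Variables (K : fieldType) (A : TAA K).
Hypothesis HA : is_TAA A.
Local Notation rel := (taa_rel A).
Local Notation mul := (taa_mul A).

Lemma rel_linear (I J : finType) d (f : I -> J) :
  bijective f -> linear (@taa_rel K A I J d f).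
Proof. by case: HA => H _ bf; apply: H. Qed.

Lemma rel_id (I : finType) d (x : taa_sp A I d) : rel id x = x.
Proof. by case: HA => _ []. Qed.

Lemma rel_comp (I J L : finType) d (f : I -> J) (g : J -> L) (x : taa_sp A I d) :
  bijective f -> bijective g -> rel (g \o f) x = rel g (rel f x).
Proof. by case: HA => _ [_ [H _]] bf bg; rewrite H. Qed.

Lemma rel_ext (I J : finType) d (f g : I -> J) (x : taa_sp A I d) :
  f =1 g -> rel f x = rel g x.
Proof. by move/functional_extensionality->. Qed.

Lemma relB (I J : finType) d (f : I -> J) (x y : taa_sp A I d) :
  bijective f -> rel f (x - y) = rel f x - rel f y.
Proof. by move/rel_linear/linear_funB. Qed.

Lemma relD (I J : finType) d (f : I -> J) (x y : taa_sp A I d) :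
  bijective f -> rel f (x + y) = rel f x + rel f y.
Proof. by move/rel_linear/linear_funD. Qed.

Lemma relZ (I J : finType) d (f : I -> J) c (x : taa_sp A I d) :
  bijective f -> rel f (c *: x) = c *: rel f x.
Proof. by move/rel_linear/linear_funZ. Qed.

Lemma rel0 (I J : finType) d (f : I -> J) :
  bijective f -> rel f (0 : taa_sp A I d) = 0.
Proof. by move/rel_linear/linear_fun0. Qed.

Lemma tmul_linearl (I J : finType) d e (y : taa_sp A J e) :
  linear (fun x : taa_sp A I d => mul x y).
Proof. by case: HA => _ [_ [_ [H _]]] c x x'; apply: H. Qed.

Lemma tmul_linearr (I J : finType) d e (x : taa_sp A I d) :
  linear (fun y : taa_sp A J e => mul x y).
Proof. by case: HA => _ [_ [_ [_ [H _]]]] c y y'; apply: H. Qed.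

Lemma tmulBl (I J : finType) d e (x x' : taa_sp A I d) (y : taa_sp A J e) :
  mul (x - x') y = mul x y - mul x' y.
Proof. exact: (linear_funB (@tmul_linearl I J d e y)). Qed.

Lemma tmulZl (I J : finType) d e c (x : taa_sp A I d) (y : taa_sp A J e) :
  mul (c *: x) y = c *: mul x y.
Proof. exact: (linear_funZ (@tmul_linearl I J d e y)). Qed.

Lemma tmul0l (I J : finType) d e (y : taa_sp A J e) : mul (0 : taa_sp A I d) y = 0.
Proof. exact: (linear_fun0 (@tmul_linearl I J d e y)). Qed.

Lemma tmulBr (I J : finType) d e (x : taa_sp A I d) (y y' : taa_sp A J e) :
  mul x (y - y') = mul x y - mul x y'.
Proof. exact: (linear_funB (@tmul_linearr I J d e x)). Qed.

Lemma tmulZr (I J : finType) d e c (x : taa_sp A I d) (y : taa_sp A J e) :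
  mul x (c *: y) = c *: mul x y.
Proof. exact: (linear_funZ (@tmul_linearr I J d e x)). Qed.

Lemma tmul0r (I J : finType) d e (x : taa_sp A I d) : mul x (0 : taa_sp A J e) = 0.
Proof. exact: (linear_fun0 (@tmul_linearr I J d e x)). Qed.

Lemma tmul_rel (I I' J J' : finType) d e (f : I -> I') (g : J -> J')
    (x : taa_sp A I d) (y : taa_sp A J e) :
  bijective f -> bijective g -> mul (rel f x) (rel g y) = rel (sumf f g) (mul x y).
Proof. by case: HA => _ [_ [_ [_ [_ [H _]]]]] bf bg; rewrite H. Qed.

Lemma tmulA (I J L : finType) d e g
    (x : taa_sp A I d) (y : taa_sp A J e) (z : taa_sp A L g) :
  rel (@sum_assoc I J L) (mul (mul x y) z) = dcast (addrA d e g) (mul x (mul y z)).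
Proof. by case: HA => _ [_ [_ [_ [_ [_ [H _]]]]]]. Qed.

Lemma tmul_rell (I I' J : finType) d e (f : I -> I') (x : taa_sp A I d)
    (y : taa_sp A J e) :
  bijective f -> mul (rel f x) y = rel (sumf f id) (mul x y).
Proof. by move=> bf; rewrite -{1}[y]rel_id tmul_rel. Qed.

Lemma tmul_relr (I J J' : finType) d e (g : J -> J') (x : taa_sp A I d)
    (y : taa_sp A J e) :
  bijective g -> mul x (rel g y) = rel (sumf id g) (mul x y).
Proof. by move=> bg; rewrite -{1}[x]rel_id tmul_rel. Qed.

Lemma tcomm_rel (I I' J J' : finType) d e (f : I -> I') (g : J -> J')
    (x : taa_sp A I d) (y : taa_sp A J e) :
  bijective f -> bijective g ->
  tcomm (rel f x) (rel g y) = rel (sumf f g) (tcomm x y).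
Proof.
move=> bf bg; rewrite /tcomm !tmul_rel // rel_dcast -rel_comp //.
rewrite (rel_ext _ (_ : _ =1 sumf f g \o @sum_swap J I)); last by case.
by rewrite rel_comp // -!rel_dcast -relZ // -relB.
Qed.

Lemma tcomm0l (I J : finType) d e (y : taa_sp A J e) :
  tcomm (0 : taa_sp A I d) y = 0.
Proof. by rewrite /tcomm tmul0l tmul0r dcast0 rel0 // scaler0 subr0. Qed.

Lemma tcomm_rell (I I' J : finType) d e (f : I -> I') (x : taa_sp A I d)
    (y : taa_sp A J e) :
  bijective f -> tcomm (rel f x) y = rel (sumf f id) (tcomm x y).
Proof. by move=> bf; rewrite -{1}[y]rel_id tcomm_rel. Qed.

Section Adjoint.
Variables (k : int) (a : taa_sp A void k).

(* [a x], [x a] and [[a, x]], relabelled from [∅ ⊔ I] to [I]; [x a] is cast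
   to degree [k + d] so that the three maps have the same type. *)
Definition lmul (I : finType) d (x : taa_sp A I d) : taa_sp A I (k + d) :=
  rel (@void_l I) (mul a x).

Definition rmul (I : finType) d (x : taa_sp A I d) : taa_sp A I (k + d) :=
  dcast (addrC d k) (rel (@void_r I) (mul x a)).

Definition ad (I : finType) d (x : taa_sp A I d) : taa_sp A I (k + d) :=
  rel (@void_l I) (tcomm a x).

Lemma adE (I : finType) d (x : taa_sp A I d) :
  ad x = lmul x - (-1) ^+ absz (k * d) *: rmul x.
Proof.
rewrite /ad /tcomm relB // relZ // -rel_comp // rel_dcast.
by rewrite (rel_ext _ (_ : _ =1 @void_r I)) // => -[|[]].
Qed.

Lemma lmul_linear (I : finType) d : linear (@lmul I d).
Proof. by move=> c x y; rewrite /lmul tmul_linearr rel_linear. Qed.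

Lemma rmul_linear (I : finType) d : linear (@rmul I d).
Proof.
by move=> c x y; rewrite /rmul tmul_linearl rel_linear // dcast_linear.
Qed.

Lemma lmul_dcast (I : finType) d d' (H : d = d') (x : taa_sp A I d) :
  lmul (dcast H x) = dcast (congr1 (+%R k) H) (lmul x).
Proof. by case: d' / H; rewrite !dcast_id. Qed.

Lemma rmul_dcast (I : finType) d d' (H : d = d') (x : taa_sp A I d) :
  rmul (dcast H x) = dcast (congr1 (+%R k) H) (rmul x).
Proof. by case: d' / H; rewrite !dcast_id. Qed.

Lemma lmul_rel (I J : finType) d (f : I -> J) (x : taa_sp A I d) :
  bijective f -> lmul (rel f x) = rel f (lmul x).
Proof.
move=> bf; rewrite /lmul tmul_relr // -!rel_comp //.
by apply: rel_ext => -[[]|].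
Qed.

Lemma rmul_rel (I J : finType) d (f : I -> J) (x : taa_sp A I d) :
  bijective f -> rmul (rel f x) = rel f (rmul x).
Proof.
move=> bf; rewrite /rmul tmul_rell // rel_dcast -!rel_comp //.
by congr dcast; apply: rel_ext => -[|[]].
Qed.

Lemma lmul_tmul (I J : finType) d e (x : taa_sp A I d) (y : taa_sp A J e)
    (H : k + d + e = k + (d + e)) :
  lmul (mul x y) = dcast H (mul (lmul x) y).
Proof.
rewrite /lmul tmul_rell // (rel_ext _ (_ : _ =1 @void_l _ \o @sum_assoc void I J));
  last by case=> [[[]|]|].
by rewrite rel_comp // tmulA // rel_dcast dcast_comp dcast_id.
Qed.

Lemma rmul_tmul (I J : finType) d e (x : taa_sp A I d) (y : taa_sp A J e)
    (H : d + (k + e) = k + (d + e)) :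
  rmul (mul x y) = dcast H (mul x (rmul y)).
Proof.
rewrite /rmul tmul_dcastr tmul_relr //.
rewrite (rel_ext _ (_ : @void_r _ =1 sumf id (@void_r J) \o @sum_assoc I J void));
  last by case=> [[]|[]].
by rewrite rel_comp // tmulA // !rel_dcast !dcast_comp; apply: dcast_irr.
Qed.

Lemma tmul_rmul_lmul (I J : finType) d e (x : taa_sp A I d) (y : taa_sp A J e) g
    (H : k + d + e = g) (H' : d + (k + e) = g) :
  dcast H (mul (rmul x) y) = dcast H' (mul x (lmul y)).
Proof.
rewrite /rmul /lmul tmul_dcastl tmul_rell //.
rewrite (rel_ext _ (_ : _ =1 sumf id (@void_l J) \o @sum_assoc I void J));
  last by case=> [[|[]]|].
by rewrite rel_comp // tmulA // tmul_relr // !rel_dcast !dcast_comp; apply: dcast_irr.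
Qed.

Lemma lmul_rmul (I : finType) d (x : taa_sp A I d) : lmul (rmul x) = rmul (lmul x).
Proof.
rewrite [rmul x]/rmul lmul_dcast lmul_rel // (lmul_tmul _ _ (esym (addrA k d k))).
by rewrite /rmul !rel_dcast !dcast_comp; apply: dcast_irr.
Qed.

Lemma lmul_lmul (I : finType) d (x : taa_sp A I d) :
  mul a a = 0 -> lmul (lmul x) = 0.
Proof.
move=> aa; rewrite [lmul x]/lmul lmul_rel // (lmul_tmul _ _ (esym (addrA k k d))).
by rewrite [lmul a]/lmul aa rel0 // tmul0l // dcast0 rel0.
Qed.

Lemma rmul_rmul (I : finType) d (x : taa_sp A I d) :
  mul a a = 0 -> rmul (rmul x) = 0.
Proof.
move=> aa; rewrite [rmul x]/rmul rmul_dcast rmul_rel // (rmul_tmul _ _ (addrCA d k k)).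
by rewrite [rmul a]/rmul aa rel0 // dcast0 tmul0r // dcast0 rel0 // dcast0.
Qed.

Lemma tcomm_ad (I : finType) d (x : taa_sp A I d) : tcomm a x = rel (@inr void I) (ad x).
Proof.
by rewrite /ad -rel_comp // (rel_ext _ (_ : _ =1 id)) ?rel_id // => -[[]|].
Qed.

Lemma ad_linear (I : finType) d : linear (@ad I d).
Proof.
move=> c x y; rewrite !adE lmul_linear rmul_linear scalerDr !scalerBr !scalerA.
by rewrite [_ * c]mulrC opprD addrACA.
Qed.

Lemma ad_rel (I J : finType) d (f : I -> J) (x : taa_sp A I d) :
  bijective f -> ad (rel f x) = rel f (ad x).
Proof. by move=> bf; rewrite !adE lmul_rel // rmul_rel // relB // relZ. Qed.

Lemma ad_dcast (I : finType) d d' (H : d = d') (x : taa_sp A I d) :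
  ad (dcast H x) = dcast (congr1 (+%R k) H) (ad x).
Proof. by case: d' / H; rewrite !dcast_id. Qed.

Lemma ad_tmul (I J : finType) d e (x : taa_sp A I d) (y : taa_sp A J e)
    (H : k + d + e = k + (d + e)) (H' : d + (k + e) = k + (d + e)) :
  ad (mul x y) =
  dcast H (mul (ad x) y) + (-1) ^+ absz (k * d) *: dcast H' (mul x (ad y)).
Proof.
rewrite !adE tmulBl tmulZl tmulBr tmulZr !dcastB !dcastZ.
rewrite -lmul_tmul -rmul_tmul (tmul_rmul_lmul _ _ H H') scalerBr subrKA scalerA.
by rewrite (mulrDr k d e) signr_abszD.
Qed.

Lemma ad_tcomm (I J : finType) d e (x : taa_sp A I d) (y : taa_sp A J e)
    (H : k + d + e = k + (d + e)) (H' : d + (k + e) = k + (d + e)) :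
  ad (tcomm x y) =
  dcast H (tcomm (ad x) y) + (-1) ^+ absz (k * d) *: dcast H' (tcomm x (ad y)).
Proof.
rewrite /tcomm (linear_funB (@ad_linear _ _)) (linear_funZ (@ad_linear _ _)).
rewrite ad_rel // ad_dcast.
rewrite (ad_tmul _ _ H H') (ad_tmul _ _ (esym (addrA k e d)) (addrCA e k d)).
rewrite !dcastB !dcastD !dcastZ relD // relZ // !rel_dcast !dcast_comp.
rewrite scalerDr scalerA opprD [- _ - _]addrC addrACA scalerBr scalerA.
(* (-1)^{(k+d)e} = (-1)^{ke} (-1)^{de} and (-1)^{kd} (-1)^{d(k+e)} = (-1)^{de} *)
rewrite (mulrDl k d e) (mulrDr d k e) !signr_abszD [d * k]mulrC signrMK.
rewrite [(-1) ^+ `|d * e| * _]mulrC.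
by congr (_ - _ *: _ + (_ - _ *: _)); apply: dcast_irr.
Qed.

Lemma ad_ad (I : finType) d (x : taa_sp A I d) :
  odd (absz k) -> mul a a = 0 -> ad (ad x) = 0.
Proof.
move=> k_odd aa; have sign_kk : (-1) ^+ absz (k * k) = -1 :> K.
  by rewrite -signr_odd abszM oddM k_odd.
rewrite !adE (linear_funB (@lmul_linear _ _)) (linear_funZ (@lmul_linear _ _)).
rewrite (linear_funB (@rmul_linear _ _)) (linear_funZ (@rmul_linear _ _)).
rewrite lmul_lmul // rmul_rmul // lmul_rmul scaler0 subr0 sub0r.
by rewrite mulrDr signr_abszD sign_kk mulN1r scaleNr opprK addNr.
Qed.

End Adjoint.

End TwistedAlgebra.

Section Morphism.
Variables (K : fieldType) (A B : TAA K).
Variable phi : forall I d, taa_sp A I d -> taa_sp B I d.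
Hypothesis phi_morph : is_TAA_morphism phi.

Lemma morph_linear (I : finType) d : linear (@phi I d).
Proof. by case: phi_morph => H _ c x y; apply: H. Qed.

Lemma morph_rel (I J : finType) d (f : I -> J) (x : taa_sp A I d) :
  bijective f -> phi (taa_rel A f x) = taa_rel B f (phi x).
Proof. by case: phi_morph => _ [H _] bf; apply: H. Qed.

Lemma morph_mul (I J : finType) d e (x : taa_sp A I d) (y : taa_sp A J e) :
  phi (taa_mul A x y) = taa_mul B (phi x) (phi y).
Proof. by case: phi_morph => _ [_ [H _]]. Qed.

Lemma morph_dcast (I : finType) d d' (H : d = d') (x : taa_sp A I d) :
  phi (dcast H x) = dcast H (phi x).
Proof. by case: d' / H. Qed.

Lemma morph_tcomm (I J : finType) d e (x : taa_sp A I d) (y : taa_sp A J e) :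
  phi (tcomm x y) = tcomm (phi x) (phi y).
Proof.
rewrite /tcomm (linear_funB (@morph_linear _ _)) (linear_funZ (@morph_linear _ _)).
by rewrite morph_rel // morph_dcast !morph_mul.
Qed.

Lemma morph_ad k (a : taa_sp A void k) (I : finType) d (x : taa_sp A I d) :
  phi (ad a x) = ad (phi a) (phi x).
Proof. by rewrite /ad morph_rel // morph_tcomm. Qed.

End Morphism.

Lemma morph_comp (K : fieldType) (A B C : TAA K)
    (phi : forall I d, taa_sp A I d -> taa_sp B I d)
    (psi : forall I d, taa_sp B I d -> taa_sp C I d) :
  is_TAA_morphism phi -> is_TAA_morphism psi ->
  is_TAA_morphism (fun I d x => psi I d (phi I d x)).
Proof.
move=> [phi_lin [phi_rel [phi_mul phi_one]]] [psi_lin [psi_rel [psi_mul psi_one]]].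
split=> [I d c x y|]; first by rewrite phi_lin psi_lin.
split=> [I J d f bf x|]; first by rewrite phi_rel // psi_rel.
by split=> [I J d e x y|]; rewrite ?phi_mul ?psi_mul // phi_one psi_one.
Qed.

Lemma morph_id (K : fieldType) (A : TAA K) :
  is_TAA_morphism (fun I d (x : taa_sp A I d) => x).
Proof. by []. Qed.

Section Relations.
Variables (K : fieldType) (A : TAA K) (D : taa_sp A void 1) (m : taa_sp A unit 0).
Hypothesis HA : is_TAA A.

Lemma rels1_relsBV : relsBV D m -> rels1 D m (ad D m).
Proof.
case=> DD mm Dm_m; have Dl : tcomm D (ad D m) = 0.
  by rewrite tcomm_ad // ad_ad // rel0.
have lm : tcomm (ad D m) m = 0 by rewrite /ad tcomm_rell // Dm_m rel0.
have ll : tcomm (ad D m) (ad D m) = 0.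
  (* [ad D [l, m] = [ad D l, m] - [l, l]], with [ad D l = ad D (ad D m) = 0]. *)
  have := ad_tcomm HA D (ad D m) m erefl erefl.
  rewrite lm ad_ad // tcomm0l // !dcast_id (linear_fun0 (@ad_linear _ _ HA _ D _ _)).
  by rewrite add0r [_ ^+ _]expr1 scaleN1r => /esym/eqP; rewrite oppr_eq0 => /eqP.
by split; rewrite // tcomm_ad.
Qed.

Lemma relsBV_rels1 (l : taa_sp A unit 1) : rels1 D m l -> relsBV D m.
Proof.
case=> DD [mm [Dm [_ [lm _]]]]; split=> //.
by rewrite Dm tcomm_rell // lm rel0.
Qed.

Lemma ad_rels1 (l : taa_sp A unit 1) : rels1 D m l -> ad D m = l.
Proof.
case=> _ [_ [Dm _]]; rewrite /ad Dm -rel_comp //.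
by rewrite (rel_ext _ (_ : _ =1 id)) ?rel_id.
Qed.

End Relations.

Lemma presented1_endo_id (K : fieldType) (A : TAA K) (D : taa_sp A void 1)
    (m : taa_sp A unit 0) (l : taa_sp A unit 1)
    (chi : forall I d, taa_sp A I d -> taa_sp A I d) :
  presented1 D m l -> is_TAA_morphism chi ->
  chi _ _ D = D -> chi _ _ m = m -> chi _ _ l = l ->
  forall I d (x : taa_sp A I d), chi I d x = x.
Proof.
case=> HA [rels univ] chi_morph chiD chim chil I d x.
have [phi [_ _ _ _ phi_unique]] := univ A D m l HA rels.
by rewrite (phi_unique _ chi_morph chiD chim chil) -(phi_unique _ (morph_id A)).
Qed.

Lemma presentedBV_endo_id (K : fieldType) (A : TAA K) (D : taa_sp A void 1)
    (m : taa_sp A unit 0) (chi : forall I d, taa_sp A I d -> taa_sp A I d) :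
  presentedBV D m -> is_TAA_morphism chi ->
  chi _ _ D = D -> chi _ _ m = m ->
  forall I d (x : taa_sp A I d), chi I d x = x.
Proof.
case=> HA [rels univ] chi_morph chiD chim I d x.
have [phi [_ _ _ phi_unique]] := univ A D m HA rels.
by rewrite (phi_unique _ chi_morph chiD chim) -(phi_unique _ (morph_id A)).
Qed.

Theorem mainTheorem8 (K : fieldType) (charK0 : [pchar K] =i pred0)
  (A : TAA K) (D : taa_sp A void 1) (m : taa_sp A unit 0) (l : taa_sp A unit 1)
  (presA : presented1 D m l)
  (tBV : TAA K) (D' : taa_sp tBV void 1) (m' : taa_sp tBV unit 0)
  (presB : presentedBV D' m') :
  TAA_isomorphic A tBV.
Proof.
have [HA [relsA univA]] := presA; have [HB [relsB univB]] := presB.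
have [phi [phi_morph phiD phim phil _]] := univA _ _ _ _ HB (rels1_relsBV HB relsB).
have [psi [psi_morph psiD psim _]] := univB _ _ _ HA (relsBV_rels1 HA relsA).
exists phi, psi; split=> //; split=> //; split.
- apply: (presented1_endo_id presA (morph_comp phi_morph psi_morph)) => /=.
  + by rewrite phiD psiD.
  + by rewrite phim psim.
  + by rewrite phil (morph_ad psi_morph D' m') psiD psim (ad_rels1 HA relsA).
- apply: (presentedBV_endo_id presB (morph_comp psi_morph phi_morph)) => /=.
  + by rewrite psiD phiD.
  + by rewrite psim phim.
Qed.
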